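(* Let $q\ge 2$ be an integer and let $\delta,\gamma\ge 0$ satisfy $\frac{\delta}{1-\frac1q}+\frac{\gamma}{q-1}\ge 1$. Then there is no infinite family of $q$-ary codes with rate bounded away from zero (block length $n\to\infty$) that is list-decodable, with list size $2^{o(n)}$, from $\delta n$ deletions and $\gamma n$ insertions.
   Context: A $q$-ary code of block length $n$ is a set $C\subseteq\Sigma^n$ with $|\Sigma|=q$; its rate is $\log_q|C|/n$. A string $y$ is obtained from $x$ by $D$ deletions and $I$ insertions if $y$ results from $x$ by deleting $D$ symbols and inserting $I$ symbols (at arbitrary positions, with arbitrary values). A code $C$ is $L$-list decodable from $\delta n$ deletions and $\gamma n$ insertions if for every string $y$ over $\Sigma$, at most $L$ codewords $x\in C$ are such that $y$ can be obtained from $x$ by at most $\delta n$ deletions and at most $\gamma n$ insertions. *)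

From mathcomp Require Import all_boot.
From Stdlib Require Import Reals.

Set Implicit Arguments.
Unset Strict Implicit.
Unset Printing Implicit Defensive.

(* y results from x by deleting exactly D symbols and inserting exactly I
   symbols: first delete D symbols of x (obtaining a subsequence z of x with
   size z + D = size x), then insert I symbols into z (so z is a subsequence
   of y with size y = size z + I). *)
Definition del_ins (T : eqType) (D I : nat) (x y : seq T) : Prop :=
  exists z : seq T,
    [&& subseq z x, size z + D == size x, subseq z y & size y == size z + I].

Definition reachable (T : eqType) (d g : R) (n : nat) (x y : seq T) : Prop :=
  exists D I : nat,
    (INR D <= d * INR n)%R /\ (INR I <= g * INR n)%R /\ del_ins D I x y.

Notation code q n := {set n.-tuple 'I_q}.

Definition rate (q n : nat) (C : code q n) : R :=
  (ln (INR #|C|) / ln (INR q) / INR n)%R.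

Definition list_decodable (q n : nat) (C : code q n) (L : nat) (d g : R) : Prop :=
  forall y : seq 'I_q,
  forall S : {set n.-tuple 'I_q},
    S \subset C ->
    (forall x : n.-tuple 'I_q, x \in S -> reachable d g n (tval x) y) ->
    #|S| <= L.

From mathcomp Require Import all_boot zify.
From Stdlib Require Import Reals Lra ClassicalEpsilon.

(* Let m be the largest integer below n with (q - 1) m <= g n.  A codeword
   x0 :: s of length n is turned into x0 :: a^c ++ (enum 'I_q)^m: the first
   n - 1 - m symbols of s are shrunk to the c copies of their most frequent
   symbol a, which costs at most a fraction 1 - 1/q of them in deletions, and
   the last m symbols are padded with (q - 1) m insertions into a subsequence
   of m copies of the alphabet.  The threshold condition makes this affordable,
   so all of C is covered by q^2 n such targets, each shared by at most L
   codewords.  Hence |C| <= q^2 n L = 2^(o(n)), contradicting a positive rate. *)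

Lemma subseq_nseq_count (T : eqType) (a : T) (s : seq T) :
  subseq (nseq (count_mem a s) a) s.
Proof.
elim: s => [|x s IH] //=.
case: eqP => [->|_] /=; first by rewrite eqxx.
exact: subseq_trans IH (subseq_cons s x).
Qed.

Lemma del_ins_cons (T : eqType) (x0 : T) (D I : nat) (x y : seq T) :
  del_ins D I x y -> del_ins D I (x0 :: x) (x0 :: y).
Proof.
case=> z /and4P[zx /eqP size_x zy /eqP size_y].
by exists (x0 :: z); rewrite /= !eqxx zx zy addSn size_x size_y addSn !eqxx.
Qed.

Section Strings.

Variable q : nat.
Hypothesis q_gt0 : 0 < q.

Lemma sum_count_mem_ord (s : seq 'I_q) : \sum_(a < q) count_mem a s = size s.
Proof.
elim: s => [|x s IH] /=; first by rewrite big1.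
rewrite big_split /= IH (bigD1 x) //= eqxx big1 ?addn0 ?add1n //.
by move=> i /negbTE; rewrite eq_sym => ->.
Qed.

Lemma exists_frequent (s : seq 'I_q) : exists a : 'I_q, size s <= q * count_mem a s.
Proof.
have nonempty : 0 < #|[pred _ : 'I_q | true]| by rewrite cardT size_enum_ord.
have [a _ max_a] := eq_bigmax_cond (fun a => count_mem a s) nonempty.
exists a; rewrite -sum_count_mem_ord -max_a.
rewrite -[X in X * _]card_ord -sum_nat_const.
by apply: leq_sum => b _; apply: (@leq_bigmax_cond _ predT (fun a => count_mem a s)).
Qed.

Lemma subseq_flatten_nseq_enum (s : seq 'I_q) :
  subseq s (flatten (nseq (size s) (enum 'I_q))).
Proof.
elim: s => [|x s IH] //=.
by rewrite -cat1s; apply: cat_subseq; rewrite // sub1seq mem_enum.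
Qed.

Lemma size_flatten_nseq_enum (m : nat) :
  size (flatten (nseq m (enum 'I_q))) = m * q.
Proof. by elim: m => [|m IH] //=; rewrite size_cat IH size_enum_ord mulSn. Qed.

Lemma del_ins_frequent_cyclic (a : 'I_q) (s t : seq 'I_q) :
  del_ins (size s - count_mem a s) ((q - 1) * size t) (s ++ t)
    (nseq (count_mem a s) a ++ flatten (nseq (size t) (enum 'I_q))).
Proof.
exists (nseq (count_mem a s) a ++ t).
rewrite !size_cat size_nseq size_flatten_nseq_enum.
have count_le : count_mem a s <= size s := count_size _ s.
apply/and4P; split.
- by apply: cat_subseq; rewrite ?subseq_refl ?subseq_nseq_count.
- by rewrite addnAC subnKC.
- by apply: cat_subseq; rewrite ?subseq_refl ?subseq_flatten_nseq_enum.
- by rewrite -addnA eqn_add2l mulnBl mul1n subnKC ?leq_pmull // mulnC.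
Qed.

End Strings.

Lemma exists_last_le (P : nat -> Prop) (N : nat) :
  P 0 -> exists2 m, m <= N & P m /\ (m = N \/ ~ P m.+1).
Proof.
move=> P0; elim: N => [|N [m le_mN [Pm [eq_mN|notPm1]]]].
- by exists 0 => //; split; [|left].
- subst m; have [PN1|notPN1] := classic (P N.+1).
    by exists N.+1 => //; split; [|left].
  by exists N => //; split; [|right].
- by exists m; [apply: leqW | split; [|right]].
Qed.

Lemma card_le_of_cover {X T : finType} (C : {set X}) (P : X -> T -> Prop) (L : nat) :
  (forall x, exists t, P x t) ->
  (forall t (S : {set X}), S \subset C -> (forall x, x \in S -> P x t) -> #|S| <= L) ->
  #|C| <= #|T| * L.
Proof.
move=> cover fiber_le.
pose f x := proj1_sig (constructive_indefinite_description _ (cover x)).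
have Pf x : P x (f x) := proj2_sig (constructive_indefinite_description _ (cover x)).
rewrite -sum1_card (partition_big f predT) //= -sum_nat_const.
apply: leq_sum => t _; rewrite sum1_card.
have -> : #|[pred x in C | f x == t]| = #|[set x in C | f x == t]|.
  by apply: eq_card => x; rewrite inE.
apply: (fiber_le t) => [|x]; first by apply/subsetP => x; rewrite inE => /andP[].
by rewrite inE => /andP[_ /eqP <-].
Qed.

Open Scope R_scope.

Lemma INR_le {a b : nat} : (a <= b)%nat -> INR a <= INR b.
Proof. by move=> /leP /le_INR. Qed.

Lemma ln_0 : ln 0 = 0.
Proof. by rewrite /ln; case: Rlt_dec => // lt00; case: (Rlt_irrefl _ lt00). Qed.

Lemma ln_le_ln {x y : R} : 0 < x -> x <= y -> ln x <= ln y.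
Proof.
move=> x_gt0 le_xy; apply: Rnot_lt_le => lt_ln.
have := ln_lt_inv _ _ (Rlt_le_trans _ _ _ x_gt0 le_xy) x_gt0 lt_ln; lra.
Qed.

Lemma ln_le_affine (k x : R) : 0 < k -> 0 < x -> ln x <= k * x - ln k - 1.
Proof.
move=> k_gt0 x_gt0.
have kx_gt0 : 0 < k * x by apply: Rmult_lt_0_compat.
have ln_le_sub1 : ln (k * x) <= k * x - 1.
  case: (Req_dec (k * x) 1) => [->|kx_neq1]; first by rewrite ln_1; lra.
  have := exp_ineq1 _ (ln_neq_0 _ kx_neq1 kx_gt0); rewrite exp_ln //; lra.
move: ln_le_sub1; rewrite ln_mult //; lra.
Qed.

Lemma deletions_le (q p c m : nat) (d g : R) :
  (0 < q)%nat -> (p <= q * c)%nat -> (c <= p)%nat ->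
  INR q - 1 <= d * INR q + g ->
  g * INR (p + m).+1 < (INR q - 1) * (INR m + 1) ->
  INR (p - c) <= d * INR (p + m).+1.
Proof.
move=> q_gt0 le_p_qc le_cp threshold few_insertions.
have : (q * (p - c) + p <= q * p)%nat by nia.
move=> /INR_le; rewrite plus_INR !mult_INR => le_qD.
move: few_insertions; rewrite S_INR plus_INR => few_insertions.
have q_ge1 : 1 <= INR q by apply: (@INR_le 1).
have n_ge0 : 0 <= INR p + INR m + 1 by have := pos_INR p; have := pos_INR m; lra.
have := Rmult_le_compat_r _ _ _ n_ge0 threshold.
have := pos_INR (p - c); nra.
Qed.

(* Keeping x0 untouched absorbs the rounding in the choice of m, whose
   maximality only gives g n < (q - 1) (m + 1). *)
Definition target {q : nat} (x0 a : 'I_q) (c m : nat) : seq 'I_q :=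
  x0 :: nseq c a ++ flatten (nseq m (enum 'I_q)).

Lemma reachable_target {q n m : nat} {d g : R} (x : n.-tuple 'I_q) :
  (0 < q)%nat -> (0 < n)%nat -> 0 <= d -> INR q - 1 <= d * INR q + g ->
  (m <= n.-1)%nat -> INR ((q - 1) * m) <= g * INR n ->
  (m = n.-1 \/ ~ INR ((q - 1) * m.+1) <= g * INR n) ->
  exists (x0 a : 'I_q) (c : 'I_n), reachable d g n x (target x0 a c m).
Proof.
move=> q_gt0 n_gt0 d_ge0 threshold le_m_n insertions last_m.
case: x => [[|x0 s] /= /eqP size_x]; first by move: n_gt0; rewrite -size_x.
set p := (n.-1 - m)%nat.
have size_s : size s = n.-1 by rewrite -size_x.
have size_take : size (take p s) = p by rewrite size_takel // size_s leq_subr.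
have size_drop : size (drop p s) = m by rewrite size_drop size_s subKn.
have [a frequent] := @exists_frequent _ q_gt0 (take p s).
set c := count_mem a (take p s) in frequent *.
have le_cp : (c <= p)%nat by rewrite -size_take count_size.
have lt_cn : (c < n)%nat by rewrite -(prednK n_gt0) ltnS (leq_trans le_cp) ?leq_subr.
exists x0, a, (Ordinal lt_cn), (p - c)%nat, ((q - 1) * m)%nat; split; [|split] => //.
- case: last_m => [eq_mn|many_insertions].
    by rewrite /p eq_mn subnn sub0n; apply: Rmult_le_pos => //; apply: pos_INR.
  have n_eq : n = (p + m).+1 by rewrite /p subnK // prednK.
  rewrite n_eq; apply: (deletions_le q _ _ _ d g) => //.
    by rewrite size_take in frequent.
  rewrite -n_eq; apply: Rnot_le_lt => within_budget; apply: many_insertions.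
  by rewrite mult_INR minus_INR ?[INR m.+1]S_INR //; apply/leP.
- rewrite -(cat_take_drop p s) /target /=; apply: del_ins_cons.
  by rewrite -size_drop -{1}size_take; exact: del_ins_frequent_cyclic.
Qed.

Lemma list_decodable_card_le {q n : nat} {C : code q n} {L : nat} {d g : R} :
  (0 < q)%nat -> (0 < n)%nat -> 0 <= d -> 0 <= g -> INR q - 1 <= d * INR q + g ->
  list_decodable C L d g -> (#|C| <= q * q * n * L)%nat.
Proof.
move=> q_gt0 n_gt0 d_ge0 g_ge0 threshold decodable.
have budget0 : INR ((q - 1) * 0) <= g * INR n.
  by rewrite muln0; apply: Rmult_le_pos => //; apply: pos_INR.
have [m le_m_n [budget last_m]] :=
  exists_last_le (fun m => INR ((q - 1) * m) <= g * INR n) n.-1 budget0.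
have -> : (q * q * n = #|{: 'I_q * 'I_q * 'I_n}|)%nat by rewrite !card_prod !card_ord.
apply: (card_le_of_cover C (fun (x : n.-tuple 'I_q) (t : 'I_q * 'I_q * 'I_n) =>
  reachable d g n x (target t.1.1 t.1.2 t.2 m))).
- move=> x; have [x0 [a [c reach]]] :=
    reachable_target x q_gt0 n_gt0 d_ge0 threshold le_m_n budget last_m.
  by exists (x0, a, c).
- by move=> t S; apply: decodable.
Qed.

Lemma ln_le_of_le_prod {N q k L : nat} :
  (0 < N)%nat -> (N <= q * q * k * L)%nat ->
  ln (INR N) <= 2 * ln (INR q) + ln (INR k) + ln (INR L).
Proof.
move=> N_gt0 le_N; have := leq_trans N_gt0 le_N.
rewrite !muln_gt0 => /andP[/andP[/andP[q_gt0 _] k_gt0] L_gt0].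
have pos (a : nat) : (0 < a)%nat -> 0 < INR a by move=> /ltP /lt_0_INR.
have := pos _ q_gt0; have := pos _ k_gt0; have := pos _ L_gt0.
have := ln_le_ln (pos _ N_gt0) (INR_le le_N).
rewrite !mult_INR => ln_le LR kR qR.
have qqk_pos : 0 < INR q * INR q * INR k by repeat apply: Rmult_lt_0_compat.
rewrite !ln_mult // in ln_le; nra.
Qed.

Lemma threshold_le {q : nat} {d g : R} :
  1 < INR q -> d / (1 - 1 / INR q) + g / (INR q - 1) >= 1 ->
  INR q - 1 <= d * INR q + g.
Proof.
move=> q_gt1; have -> : d / (1 - 1 / INR q) + g / (INR q - 1) =
  (d * INR q + g) / (INR q - 1) by field; lra.
move=> /Rge_le; set u := (_ / _) => u_ge1.
have -> : d * INR q + g = u * (INR q - 1) by rewrite /u; field; lra.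
nra.
Qed.

Lemma ln_card_ge_rate {q n : nat} {C : code q n} {r : R} :
  1 < INR q -> (0 < n)%nat -> r <= rate C ->
  r * ln (INR q) * INR n <= ln (INR #|C|).
Proof.
move=> q_gt1 n_gt0; rewrite /rate.
have lnq_gt0 : 0 < ln (INR q) by rewrite -ln_1; apply: ln_increasing; lra.
have n_pos : 0 < INR n by apply/lt_0_INR/ltP.
have scale_pos : 0 <= ln (INR q) * INR n by apply: Rlt_le; apply: Rmult_lt_0_compat.
move=> /(Rmult_le_compat_r _ _ _ scale_pos).
have -> : ln (INR #|C|) / ln (INR q) / INR n * (ln (INR q) * INR n) = ln (INR #|C|)
  by field; lra.
by rewrite Rmult_assoc.
Qed.

Lemma block_length_le {A : R} {q k L N : nat} :
  0 < A -> (0 < k)%nat -> (N <= q * q * k * L)%nat ->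
  A * INR k <= ln (INR N) -> INR L <= exp (A * INR k / 4) ->
  INR k <= 2 * (2 * ln (INR q) - ln (A / 4) - 1) / A.
Proof.
move=> A_gt0 k_gt0 le_N rate_bound L_small.
have k_pos : 0 < INR k by apply/lt_0_INR/ltP.
have Ak_pos : 0 < A * INR k by apply: Rmult_lt_0_compat.
have N_gt0 : (0 < N)%nat.
  by rewrite lt0n; apply/eqP => N0; move: rate_bound; rewrite N0 ln_0; lra.
have L_pos : 0 < INR L.
  apply/lt_0_INR/ltP; move: (leq_trans N_gt0 le_N).
  by rewrite muln_gt0 => /andP[].
have ln_L : ln (INR L) <= A * INR k / 4 by rewrite -[X in _ <= X]ln_exp; apply: ln_le_ln.
have ln_k := ln_le_affine (A / 4) (INR k) ltac:(lra) k_pos.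
have ln_N := ln_le_of_le_prod N_gt0 le_N.
apply: (Rmult_le_reg_l A) => //.
have -> : A * (2 * (2 * ln (INR q) - ln (A / 4) - 1) / A) =
  2 * (2 * ln (INR q) - ln (A / 4) - 1) by field; lra.
lra.
Qed.

Close Scope R_scope.

Theorem proposition1 (q : nat) (d g : R) :
  2 <= q ->
  (0 <= d)%R -> (0 <= g)%R ->
  (d / (1 - 1 / INR q) + g / (INR q - 1) >= 1)%R ->
  ~ (exists (n : nat -> nat) (C : forall i : nat, code q (n i)) (L : nat -> nat),
       (* block lengths tend to infinity *)
       (forall N : nat, exists i0 : nat, forall i : nat, i0 <= i -> N <= n i) /\
       (* rate bounded away from zero *)
       (exists r : R, (0 < r)%R /\ forall i : nat, (r <= rate (C i))%R) /\
       (* list size 2^{o(n)} *)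
       (forall eps : R, (0 < eps)%R ->
          exists i0 : nat, forall i : nat, i0 <= i ->
            (INR (L i) <= Rpower 2 (eps * INR (n i)))%R) /\
       (* list decodability from dn deletions and gn insertions *)
       (forall i : nat, list_decodable (C i) (L i) d g)).
Proof.
move=> q_ge2 d_ge0 g_ge0 threshold_cond
  [n [C [L [n_unbounded [[r [r_gt0 r_le_rate]] [L_subexp decodable]]]]]].
have q_gt1 : (1 < INR q)%R by have := @INR_le 2 q q_ge2; rewrite /=; lra.
have threshold := threshold_le q_gt1 threshold_cond.
have lnq_gt0 : (0 < ln (INR q))%R by rewrite -ln_1; apply: ln_increasing; lra.
have ln2_gt0 : (0 < ln 2)%R by rewrite -ln_1; apply: ln_increasing; lra.
set A := (r * ln (INR q))%R.
have A_gt0 : (0 < A)%R by apply: Rmult_lt_0_compat.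
have [i1 L_small] := L_subexp (A / (4 * ln 2))%R
  ltac:(apply: Rdiv_lt_0_compat; lra).
have [N N_large] := INR_unbounded (2 * (2 * ln (INR q) - ln (A / 4) - 1) / A).
have [i0 n_large] := n_unbounded N.+1.
set i := maxn i0 i1; set k := n i.
have k_gt_N : N < k by apply: n_large; rewrite leq_maxl.
have k_gt0 : 0 < k by apply: leq_ltn_trans k_gt_N.
have card_le := list_decodable_card_le (ltnW q_ge2) k_gt0 d_ge0 g_ge0 threshold
  (decodable i).
have L_bound : (INR (L i) <= exp (A * INR k / 4))%R.
  have := L_small i (leq_maxr i0 i1); rewrite /Rpower -/k.
  by have -> : (A / (4 * ln 2) * INR k * ln 2 = A * INR k / 4)%R by field; lra.
have := block_length_le A_gt0 k_gt0 card_le (ln_card_ge_rate q_gt1 k_gt0 (r_le_rate i))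
  L_bound.
have := @INR_le N.+1 k k_gt_N; rewrite S_INR; lra.
Qed.
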